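(* Let $X$ be a nonnegative integer-valued random variable whose distribution $p_i=\Pr[X=i]$ is log-concave. Then $X$ is moment bounded with parameter $L=1+\mathbb E[|X|]$.
   Context: A distribution $(p_i)_{i\in\mathbb Z}$ on the integers is log-concave if $p_{i+1}^2\ge p_ip_{i+2}$ for all $i$. A random variable $Z$ is moment bounded with parameter $L>0$ if for every integer $i\ge1$, $\mathbb E[|Z|^i]\le iL\,\mathbb E[|Z|^{i-1}]$.
   Formalization: Log-concavity of the distribution pᵢ also excludes internal zeros: whenever i < j < k with pᵢ > 0 and pₖ > 0, also pⱼ > 0, so the support of X is a contiguous set of integers. The statement above fails without it. *)

From HB Require Import structures.
From mathcomp Require Import all_boot all_order all_algebra.
From mathcomp Require Import all_classical all_reals all_analysis.
Set Implicit Arguments. Unset Strict Implicit. Unset Printing Implicit Defensive.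
Import Order.TTheory GRing.Theory Num.Theory.
Local Open Scope ring_scope.
Local Open Scope ereal_scope.

Definition is_nat_distribution (R : realType) (p : nat -> R) : Prop :=
  (forall i, (0 <= p i)%R) /\ \sum_(0 <= i <oo) (p i)%:E = 1.

Definition extZ (R : realType) (p : nat -> R) (z : int) : R :=
  match z with Posz n => p n | Negz _ => 0%R end.

(* Log-concavity on the integers as in the paper: p_{i+1}^2 >= p_i p_{i+2},
   together with the standard convention that the support has no internal
   zeros. *)
Definition log_concaveZ (R : realType) (q : int -> R) : Prop :=
  (forall i : int, q i * q (i + 2%:Z) <= q (i + 1%:Z) ^+ 2)%R /\
  (forall i j k : int, (i < j)%R -> (j < k)%R ->
     (0 < q i)%R -> (0 < q k)%R -> (0 < q j)%R).

Definition nat_moment (R : realType) (p : nat -> R) (i : nat) : \bar R :=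
  \sum_(0 <= k <oo) ((k%:R ^+ i * p k)%R)%:E.

Definition moment_bounded (R : realType) (p : nat -> R) (L : \bar R) : Prop :=
  0 < L /\
  forall i : nat, (1 <= i)%N ->
    nat_moment p i <= (i%:R)%:E * L * nat_moment p i.-1.

(* Log-concavity (with a support free of internal zeros) makes the ratios
   p_(k+1) / p_k nonincreasing on the support, hence p_n T_m <= p_m T_n for
   n <= m, where T_m = sum_(k >= m) p_k is the tail.  From
   k^(j+1) <= (j+1) sum_(m <= k) m^j we get E[X^(j+1)] <= (j+1) sum_m m^j T_m,
   and Chebyshev's sum inequality for the nondecreasing weights m^j against
   T_m / p_m, which is nonincreasing, gives
     sum_m m^j T_m <= E[X^j] sum_m T_m = E[X^j] (1 + E[X]).
   All of this is done on truncations to [0, N) and then passed to the limit. *)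

From HB Require Import structures.
From mathcomp Require Import all_boot all_order all_algebra.
From mathcomp Require Import all_classical all_reals all_analysis.
From mathcomp Require Import ring zify.
Set Implicit Arguments. Unset Strict Implicit. Unset Printing Implicit Defensive.
Import Order.TTheory GRing.Theory Num.Theory.
Local Open Scope ring_scope.

Section LogConcaveSequence.
Variables (R : realFieldType) (p : nat -> R).
Hypothesis p_ge0 : forall k, 0 <= p k.
Hypothesis p_lc : forall k, p k * p (k + 2)%N <= p (k + 1)%N ^+ 2.
Hypothesis p_nogap : forall a b c, (a < b < c)%N -> 0 < p a -> 0 < p c -> 0 < p b.

Lemma lc_ratio_le k d : (forall t, (k <= t <= k + d + 1)%N -> 0 < p t) ->
  p (k + d + 1)%N * p k <= p (k + d)%N * p (k + 1)%N.
Proof.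
elim: d => [|d IH] pos; first by rewrite addn0 mulrC.
have IHd : p (k + d.+1)%N * p k <= p (k + d)%N * p (k + 1)%N.
  by rewrite -[d.+1]addn1 addnA; apply: IH => t /andP[? ?]; apply: pos; lia.
have lcd : p (k + d)%N * p (k + d.+1 + 1)%N <= p (k + d.+1)%N ^+ 2.
  have -> : (k + d.+1 + 1 = k + d + 2)%N by lia.
  have -> : (k + d.+1 = k + d + 1)%N by lia.
  exact: p_lc.
have pk : 0 < p k by apply: pos; lia.
have pkd : 0 < p (k + d)%N by apply: pos; lia.
have pkd1 : 0 < p (k + d.+1)%N by apply: pos; lia.
rewrite -(ler_pM2r (mulr_gt0 pkd pkd1)).
set a := p k; set b := p (k + 1)%N; set x := p (k + d)%N.
set y := p (k + d.+1)%N; set z := p (k + d.+1 + 1)%N.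
have -> : z * a * (x * y) = (x * z) * (a * y) by ring.
have -> : y * b * (x * y) = y ^+ 2 * (x * b) by ring.
by apply: ler_pM; rewrite ?mulr_ge0 ?p_ge0 // mulrC.
Qed.

Lemma lc_cross_le a d c : (forall t, (a <= t <= a + d + c)%N -> 0 < p t) ->
  p a * p (a + d + c)%N <= p (a + d)%N * p (a + c)%N.
Proof.
elim: d => [|d IH] pos; first by rewrite !addn0.
have IHd : p a * p (a + d + c)%N <= p (a + d)%N * p (a + c)%N.
  by apply: IH => t /andP[? ?]; apply: pos; lia.
have ratio : p (a + d.+1 + c)%N * p (a + d)%N <= p (a + d + c)%N * p (a + d.+1)%N.
  have -> : (a + d.+1 + c = a + d + c + 1)%N by lia.
  have -> : (a + d.+1 = a + d + 1)%N by lia.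
  by apply: lc_ratio_le => t /andP[? ?]; apply: pos; lia.
have pad : 0 < p (a + d)%N by apply: pos; lia.
have padc : 0 < p (a + d + c)%N by apply: pos; lia.
rewrite -(ler_pM2r (mulr_gt0 pad padc)).
set u := p a; set v := p (a + d)%N; set w := p (a + c)%N; set s := p (a + d + c)%N.
set t := p (a + d.+1 + c)%N; set q := p (a + d.+1)%N.
have -> : u * t * (v * s) = (u * s) * (t * v) by ring.
have -> : q * w * (v * s) = (v * w) * (s * q) by ring.
by apply: ler_pM; rewrite ?mulr_ge0 ?p_ge0.
Qed.

Lemma lc_shift_le n m c : (n <= m)%N -> p n * p (m + c)%N <= p m * p (n + c)%N.
Proof.
move=> le_nm.
have [pn0|pn_neq0] := eqVneq (p n) 0; first by rewrite pn0 mul0r mulr_ge0.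
have [pmc0|pmc_neq0] := eqVneq (p (m + c)%N) 0; first by rewrite pmc0 mulr0 mulr_ge0.
have pos t : (n <= t <= n + (m - n) + c)%N -> 0 < p t.
  move=> /andP[? ?].
  have [->|neq_tn] := eqVneq t n; first by rewrite lt0r pn_neq0 p_ge0.
  have [->|neq_tmc] := eqVneq t (m + c)%N; first by rewrite lt0r pmc_neq0 p_ge0.
  apply: (@p_nogap n t (m + c)%N); rewrite ?lt0r ?pn_neq0 ?pmc_neq0 ?p_ge0 //.
  by apply/andP; split; lia.
by have := @lc_cross_le n (m - n) c pos; rewrite subnKC.
Qed.

End LogConcaveSequence.

Section NatPowers.
Local Open Scope nat_scope.

Lemma expnS_succ_le k j : (k + 1) ^ j.+1 <= k ^ j.+1 + j.+1 * (k + 1) ^ j.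
Proof.
elim: j => [|j IH]; first by rewrite !expn1 expn0; lia.
have : k ^ j.+1 <= (k + 1) ^ j.+1 by rewrite leq_exp2r //; lia.
move: IH; rewrite !(expnS k) !(expnS (k + 1)).
move: (k ^ j) ((k + 1) ^ j) => a b; nia.
Qed.

Lemma expnS_le_sum k j : k ^ j.+1 <= j.+1 * \sum_(m < k.+1) m ^ j.
Proof.
elim: k => [|k IH]; first by rewrite exp0n.
rewrite big_ord_recr /= mulnDr.
have := expnS_succ_le k j; rewrite addn1 => /leq_trans; apply.
by rewrite leq_add2r.
Qed.

End NatPowers.

Lemma sumr_pairs_ge0 (R : numDomainType) (I : finType) (h : I -> I -> R) :
  (forall i j, 0 <= h i j + h j i) -> 0 <= \sum_i \sum_j h i j.
Proof.
move=> h_sym; rewrite -(pmulrn_lge0 _ (isT : (0 < 2)%N)) mulr2n.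
rewrite [X in _ + X]exchange_big -big_split /=.
by apply: sumr_ge0 => i _; rewrite -big_split /=; apply: sumr_ge0 => j _.
Qed.

Section Truncation.
Variables (R : realFieldType) (p : nat -> R) (N : nat).

Definition trunc_mass := \sum_(k < N) p k.
Definition trunc_moment j := \sum_(k < N) (k%:R) ^+ j * p k.
Definition tail m := \sum_(m <= k < N) p k.
Definition tail_moment j := \sum_(m < N) (m%:R) ^+ j * tail m.

Lemma tail_ord m : tail m = \sum_(k < N | (m <= k)%N) p k.
Proof. by rewrite /tail big_geq_mkord. Qed.

Lemma trunc_moment_le_tail_moment j :
  (forall k, 0 <= p k) -> trunc_moment j.+1 <= j.+1%:R * tail_moment j.
Proof.
move=> p_ge0; rewrite /tail_moment.
under eq_bigr => m _ do rewrite tail_ord mulr_sumr big_mkcond /=.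
rewrite exchange_big /= mulr_sumr; apply: ler_sum => k _.
rewrite -big_mkcond /= -mulr_suml mulrA ler_wpM2r //.
have := expnS_le_sum k j; rewrite -(ler_nat R) natrM natrX natr_sum => le_kj.
apply: le_trans le_kj _; rewrite ler_pM2l ?ltr0Sn //.
by rewrite (big_ord_widen N (fun m => (m ^ j)%:R) (ltn_ord k)); under eq_bigr do rewrite natrX.
Qed.

Lemma sum_tail : \sum_(m < N) tail m = trunc_mass + trunc_moment 1.
Proof.
under eq_bigr => m _ do rewrite tail_ord big_mkcond /=.
rewrite exchange_big -big_split /=; apply: eq_bigr => k _.
rewrite -big_mkcond /= sumr_const expr1.
have -> : #|[pred i : 'I_N | (i <= k)%N]| = k.+1.
  rewrite -[RHS](card_ord k.+1) -!sum1_card.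
  by rewrite (big_ord_widen N (fun _ => 1%N) (ltn_ord k)).
by rewrite mulrS mulr_natl.
Qed.

Section LogConcave.
Hypothesis p_ge0 : forall k, 0 <= p k.
Hypothesis p_shift : forall n m c, (n <= m)%N -> p n * p (m + c)%N <= p m * p (n + c)%N.

Lemma tail_cross_le n m : (n <= m)%N -> p n * tail m <= p m * tail n.
Proof.
move=> le_nm; rewrite /tail -{1}[m]add0n -{2}[n]add0n !big_addn.
have le_lengths : (N - m <= N - n)%N by lia.
rewrite [in X in _ <= X](big_cat_nat _ (n := (N - m)%N)) //=.
rewrite mulrDr !mulr_sumr -[X in X <= _]addr0 lerD //.
  by apply: ler_sum => c _; rewrite ![(c + _)%N]addnC p_shift.
by apply: sumr_ge0 => c _; rewrite mulr_ge0.
Qed.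

(* Chebyshev's sum inequality: pairing (n, m) with (m, n) reduces it to tail_cross_le. *)
Lemma mass_tail_moment_le j :
  trunc_mass * tail_moment j <= trunc_moment j * \sum_(m < N) tail m.
Proof.
pose f (m : nat) : R := m%:R ^+ j.
pose h (n m : 'I_N) := f m * (p m * tail n - p n * tail m).
rewrite -subr_ge0.
have -> : trunc_moment j * \sum_(m < N) tail m - trunc_mass * tail_moment j
    = \sum_n \sum_m h n m.
  rewrite mulr_sumr /trunc_mass mulr_suml -sumrB; apply: eq_bigr => n _.
  rewrite /trunc_moment /tail_moment mulr_suml mulr_sumr -sumrB.
  by apply: eq_bigr => m _; rewrite /h /f; ring.
apply: sumr_pairs_ge0 => n m.
have -> : h n m + h m n = (f m - f n) * (p m * tail n - p n * tail m) by rewrite /h; ring.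
have f_mono a b : (a <= b)%N -> f a <= f b.
  by move=> le_ab; rewrite lerXn2r ?nnegrE ?ler0n ?ler_nat.
have [le_nm|lt_mn] := leqP n m.
  by rewrite mulr_ge0 // subr_ge0 ?f_mono ?tail_cross_le.
by rewrite mulr_le0 // subr_le0 ?f_mono ?tail_cross_le // ltnW.
Qed.

Lemma trunc_moment_bounded j :
  trunc_mass * trunc_moment j.+1
    <= j.+1%:R * (trunc_mass + trunc_moment 1) * trunc_moment j.
Proof.
have mass_ge0 : 0 <= trunc_mass by rewrite sumr_ge0.
apply: (le_trans (y := trunc_mass * (j.+1%:R * tail_moment j))).
  by rewrite ler_wpM2l ?trunc_moment_le_tail_moment.
rewrite mulrCA -sum_tail [X in _ <= X]mulrAC -[X in _ <= X]mulrA.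
by rewrite ler_wpM2l ?mass_tail_moment_le.
Qed.

End LogConcave.
End Truncation.

Lemma psum_le_widen (R : numDomainType) (u : nat -> R) a b :
  (forall k, 0 <= u k) -> (a <= b)%N -> \sum_(k < a) u k <= \sum_(k < b) u k.
Proof.
move=> u_ge0 le_ab; rewrite (big_ord_widen b u le_ab).
rewrite [X in _ <= X](bigID (fun k : 'I_b => (k < a)%N)) /=.
by rewrite lerDl sumr_ge0.
Qed.

Section Series.
Variable R : realType.
Local Open Scope ereal_scope.

Lemma psum_le_nneseries (u : nat -> R) N : (forall k, (0 <= u k)%R) ->
  (\sum_(k < N) u k)%:E <= \sum_(0 <= k <oo) (u k)%:E.
Proof.
move=> u_ge0; rewrite -sumEFin -(big_mkord xpredT (fun k => (u k)%:E)).
by apply: nneseries_lim_ge => n _ _; rewrite lee_fin.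
Qed.

Lemma nneseries_le_of_psum (u : nat -> R) (x : \bar R) : (forall k, (0 <= u k)%R) ->
  (forall N, (\sum_(k < N) u k)%:E <= x) -> \sum_(0 <= k <oo) (u k)%:E <= x.
Proof.
move=> u_ge0 le_x; apply: lime_le.
  by apply: is_cvg_nneseries => n _ _; rewrite lee_fin.
by apply: nearW => N /=; rewrite sumEFin big_mkord.
Qed.

(* Weighting by a mass-one series u lets us bound each partial sum of v
   without ever choosing a truncation of u with positive mass. *)
Lemma nneseries_le_of_psum_mul (u v : nat -> R) (C : \bar R) :
  (forall k, (0 <= u k)%R) -> (forall k, (0 <= v k)%R) ->
  \sum_(0 <= k <oo) (u k)%:E = 1 ->
  (forall N0 N, ((\sum_(k < N0) u k) * \sum_(k < N) v k)%:E <= C) ->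
  \sum_(0 <= k <oo) (v k)%:E <= C.
Proof.
move=> u_ge0 v_ge0 u_mass le_C; apply: nneseries_le_of_psum => // N.
have vN_ge0 : (0 <= \sum_(k < N) v k)%R by rewrite sumr_ge0.
rewrite -[_%:E]mule1 -u_mass -nneseriesZl => [|k _]; last by rewrite lee_fin.
under eq_eseriesr do rewrite -EFinM.
apply: nneseries_le_of_psum => [k|N0]; first by rewrite mulr_ge0.
by rewrite -mulr_sumr mulrC.
Qed.

End Series.

Local Open Scope ereal_scope.

Lemma log_concaveZ_extZ (R : realType) (p : nat -> R) : log_concaveZ (extZ p) ->
  (forall k, p k * p (k + 2)%N <= p (k + 1)%N ^+ 2)%R /\
  (forall a b c, (a < b < c)%N -> (0 < p a)%R -> (0 < p c)%R -> (0 < p b)%R).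
Proof.
move=> [lc nogap]; split=> [k|a b c /andP[lt_ab lt_bc]].
  by have := lc (Posz k); rewrite -!PoszD.
by apply: (nogap (Posz a) (Posz b) (Posz c)); rewrite ltz_nat.
Qed.

Lemma trunc_moment_le_moment (R : realType) (p : nat -> R) N i :
  (forall k, 0 <= p k)%R -> (trunc_moment p N i)%:E <= nat_moment p i.
Proof.
by move=> p_ge0; apply: psum_le_nneseries => k; rewrite mulr_ge0 ?exprn_ge0.
Qed.

Theorem lemma27 (R : realType) (p : nat -> R) :
  is_nat_distribution p ->
  log_concaveZ (extZ p) ->
  moment_bounded p (1 + nat_moment p 1).
Proof.
move=> [p_ge0 p_mass] /log_concaveZ_extZ[p_lc p_nogap].
have p_shift := lc_shift_le p_ge0 p_lc p_nogap.
have term_ge0 i k : (0 <= k%:R ^+ i * p k)%R by rewrite mulr_ge0 ?exprn_ge0.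
split.
  apply: (lt_le_trans (y := 1)) => //.
  by rewrite leeDl // nneseries_ge0 // => k _ _; rewrite lee_fin.
case=> [//|j] _ /=.
apply: (nneseries_le_of_psum_mul p_ge0 (term_ge0 j.+1) p_mass) => N0 N.
pose K := maxn N0 N.
apply: (le_trans (y := (trunc_mass p K * trunc_moment p K j.+1)%:E)).
  rewrite lee_fin; apply: ler_pM; rewrite ?sumr_ge0 //.
  - exact: psum_le_widen p_ge0 (leq_maxl _ _).
  - exact: psum_le_widen (term_ge0 _) (leq_maxr _ _).
apply: (le_trans (y := (j.+1%:R * (trunc_mass p K + trunc_moment p K 1)
                          * trunc_moment p K j)%:E)).
  by rewrite lee_fin trunc_moment_bounded.
rewrite !EFinM EFinD lee_pmul ?lee_fin ?mulr_ge0 ?addr_ge0 ?sumr_ge0 //.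
  rewrite lee_wpmul2l ?lee_fin // leeD ?trunc_moment_le_moment //.
  by rewrite -p_mass psum_le_nneseries.
by rewrite trunc_moment_le_moment.
Qed.
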